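(* Let $R$ be a commutative ring with identity and $a\in R$. Then $$\bigcap_{b\in R} b\Gamma_b(R)\subseteq a\Gamma_a(R)\subseteq S_a(R)\subseteq S(R)=\mathcal{N}(R)\subseteq \operatorname{Rad}(R).$$
   Context: For $b\in R$, $b\Gamma_{b}(R)=\{br \mid r\in R,\ b^{k}r=0 \text{ for some } k\in\mathbb{Z}^{+}\}$. An $R$-module $N$ is $b$-reduced if $b^2n=0$ implies $bn=0$ for $n\in N$, and reduced if it is $b$-reduced for all $b$. A proper ideal $I$ of $R$ is $a$-semiprime (resp. semiprime) if the $R$-module $R/I$ is $a$-reduced (resp. reduced). $S_a(R)$ and $S(R)$ are the intersections of all $a$-semiprime, resp. semiprime, ideals; $\mathcal{N}(R)$ is the set of nilpotent elements of $R$; $\operatorname{Rad}(R)$ is the Jacobson radical. *)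

From mathcomp Require Import all_boot all_algebra.
Set Implicit Arguments. Unset Strict Implicit. Unset Printing Implicit Defensive.
Import GRing.Theory.
Local Open Scope ring_scope.

Definition bGamma (R : comNzRingType) (b : R) : R -> Prop :=
  fun x => exists r : R, x = b * r /\ exists k : nat, (0 < k)%N /\ b ^+ k * r = 0.

Definition is_ideal (R : comNzRingType) (I : R -> Prop) : Prop :=
  [/\ I 0, (forall x y, I x -> I y -> I (x + y)) & (forall r x, I x -> I (r * x))].

Definition proper_ideal (R : comNzRingType) (I : R -> Prop) : Prop :=
  is_ideal I /\ ~ I 1.

(* The R-module R/I is a-reduced: a^2 n = 0 implies a n = 0 for n in R/I,
   i.e. for x in R, a^2 x in I implies a x in I. *)
Definition a_semiprime (R : comNzRingType) (a : R) (I : R -> Prop) : Prop :=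
  proper_ideal I /\ (forall x : R, I (a ^+ 2 * x) -> I (a * x)).

Definition semiprime (R : comNzRingType) (I : R -> Prop) : Prop :=
  proper_ideal I /\ (forall b x : R, I (b ^+ 2 * x) -> I (b * x)).

Definition S_a (R : comNzRingType) (a : R) : R -> Prop :=
  fun x => forall I : R -> Prop, a_semiprime a I -> I x.

Definition S_R (R : comNzRingType) : R -> Prop :=
  fun x => forall I : R -> Prop, semiprime I -> I x.

Definition nilradical (R : comNzRingType) : R -> Prop :=
  fun x => exists n : nat, x ^+ n = 0.

Definition maximal_ideal (R : comNzRingType) (M : R -> Prop) : Prop :=
  proper_ideal M /\
  (forall J : R -> Prop, is_ideal J -> (forall x, M x -> J x) ->
     (forall x, J x -> M x) \/ J 1).

Definition jacobson (R : comNzRingType) : R -> Prop :=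
  fun x => forall M : R -> Prop, maximal_ideal M -> M x.

(* An element of aΓ_a(R) is a r with a^k r = 0; in an a-reduced quotient R/I
   the relation a^(j+2) r ∈ I descends step by step to a r ∈ I, and 0 ∈ I.
   The same descent with b = x puts every nilpotent x into every semiprime
   ideal, while the nilradical is itself semiprime because
   (b x)^(2n) = (b^2 x)^n x^n.  Finally, if x^n = 0 and x lies outside a
   maximal ideal M, then M + R x = R gives 1 - r x ∈ M, yet 1 - r x divides
   1 - (r x)^n = 1. *)
From mathcomp Require Import all_boot all_algebra.
From mathcomp Require Import zify ring.
Local Open Scope ring_scope.
Import GRing.Theory.

Lemma reduced_exprS_mul {R : comNzRingType} {I : R -> Prop} {a : R} (k : nat) (x : R) :
  (forall y, I (a ^+ 2 * y) -> I (a * y)) -> I (a ^+ k.+1 * x) -> I (a * x).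
Proof.
move=> reduced_a; elim: k x => [//|k IHk] x Ix.
apply: IHk; rewrite exprS -mulrA; apply: reduced_a.
by rewrite mulrA -exprD add2n.
Qed.

Lemma bGamma_sub_S_a {R : comNzRingType} (a x : R) : bGamma a x -> S_a a x.
Proof.
move=> [r [-> [k [k_gt0 akr0]]]] I [[[I0 _ _] _] reduced_a].
case: k k_gt0 akr0 => [//|k] _ akr0.
by apply: (reduced_exprS_mul k r reduced_a); rewrite akr0.
Qed.

Lemma S_a_sub_S_R {R : comNzRingType} (a x : R) : S_a a x -> S_R x.
Proof. by move=> Sx I [properI reducedI]; apply: Sx; split=> //; exact: reducedI. Qed.

Lemma nilradical_sub_S_R {R : comNzRingType} (x : R) : nilradical x -> S_R x.
Proof.
move=> [n xn0] I [[[I0 _ _] _] reducedI].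
rewrite -[x]mulr1; apply: (reduced_exprS_mul n 1 (reducedI x)).
by rewrite exprS xn0 mulr0 mul0r.
Qed.

Lemma expr_eq0_le {R : comNzRingType} {x : R} {n k : nat} :
  x ^+ n = 0 -> (n <= k)%N -> x ^+ k = 0.
Proof. by move=> xn0 le_nk; rewrite -(subnKC le_nk) exprD xn0 mul0r. Qed.

Lemma nilradicalD {R : comNzRingType} (x y : R) :
  nilradical x -> nilradical y -> nilradical (x + y).
Proof.
move=> [n xn0] [m ym0]; exists (n + m)%N.
rewrite exprDn big1 // => i _.
have [le_mi | lt_im] := leqP m i.
  by rewrite (expr_eq0_le ym0 le_mi) mulr0 mul0rn.
have le_n : (n <= n + m - i)%N by lia.
by rewrite (expr_eq0_le xn0 le_n) mul0r mul0rn.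
Qed.

Lemma nilradical_semiprime {R : comNzRingType} : semiprime (@nilradical R).
Proof.
split; first split; first split.
- by exists 1%N; rewrite expr1.
- exact: nilradicalD.
- by move=> r x [n xn0]; exists n; rewrite exprMn xn0 mulr0.
- by move=> [n]; rewrite expr1n; apply/eqP; exact: oner_neq0.
move=> b x [n bbxn0]; exists (n + n)%N.
have -> : (b * x) ^+ (n + n) = (b ^+ 2 * x) ^+ n * x ^+ n.
  by rewrite exprD !exprMn; ring.
by rewrite bbxn0 mul0r.
Qed.

Lemma S_R_sub_nilradical {R : comNzRingType} (x : R) : S_R x -> nilradical x.
Proof. by apply; exact: nilradical_semiprime. Qed.

Definition ideal_adjoin {R : comNzRingType} (M : R -> Prop) (x : R) : R -> Prop :=
  fun y => exists m r, M m /\ y = m + r * x.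

Lemma ideal_adjoin_ideal {R : comNzRingType} {M : R -> Prop} (x : R) :
  is_ideal M -> is_ideal (ideal_adjoin M x).
Proof.
move=> [M0 MD MM]; split.
- by exists 0, 0; rewrite mul0r addr0.
- move=> _ _ [m [r [Mm ->]]] [m' [r' [Mm' ->]]].
  by exists (m + m'), (r + r'); split; [exact: MD | ring].
- move=> s _ [m [r [Mm ->]]].
  by exists (s * m), (s * r); split; [exact: MM | ring].
Qed.

Lemma maximal_ideal_adjoin_one {R : comNzRingType} {M : R -> Prop} (x : R) :
  maximal_ideal M -> M x \/ exists r, M (1 - r * x).
Proof.
move=> [[idealM _] maxM]; have [M0 _ _] := idealM.
have M_adjoin : forall y, M y -> ideal_adjoin M x y.
  by move=> y My; exists y, 0; rewrite mul0r addr0.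
case: (maxM _ (ideal_adjoin_ideal x idealM) M_adjoin) => [adjoin_M | [m [r [Mm one]]]].
  by left; apply: adjoin_M; exists 0, 1; rewrite mul1r add0r.
by right; exists r; rewrite one addrK.
Qed.

Lemma ideal_one_sub_nilpotent {R : comNzRingType} {M : R -> Prop} {y : R} :
  is_ideal M -> nilradical y -> M (1 - y) -> M 1.
Proof.
move=> [_ _ MM] [n yn0] M1y.
have := subrXX 1 y n; rewrite expr1n yn0 subr0 => ->.
by rewrite mulrC; apply: MM.
Qed.

Lemma nilradical_sub_jacobson {R : comNzRingType} (x : R) :
  nilradical x -> jacobson x.
Proof.
move=> [n xn0] M maxM; have [[idealM notM1] _] := maxM.
case: (maximal_ideal_adjoin_one x maxM) => [// | [r M1rx]].
case: notM1; apply: (ideal_one_sub_nilpotent idealM _ M1rx).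
by exists n; rewrite exprMn xn0 mulr0.
Qed.

Theorem mainTheorem13 (R : comNzRingType) (a : R) :
  [/\ (forall x : R, (forall b : R, bGamma b x) -> bGamma a x),
      (forall x : R, bGamma a x -> S_a a x),
      (forall x : R, S_a a x -> S_R x),
      (forall x : R, S_R x <-> nilradical x)
    & (forall x : R, nilradical x -> jacobson x)].
Proof.
split.
- by move=> x; apply.
- exact: bGamma_sub_S_a.
- exact: S_a_sub_S_R.
- by move=> x; split; [exact: S_R_sub_nilradical | exact: nilradical_sub_S_R].
- exact: nilradical_sub_jacobson.
Qed.
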